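(* Let $n\ge4$ be even. The map $\rho:\mathcal F_{n-2}\to Y_1$, $z\mapsto w_0zs_{n-1}w_0$, is an order-preserving one-to-one mapping (onto $Y_1$) with respect to the Bruhat orders.
   Context: $s_i=(i,i+1)$; permutations compose right to left. For even $m$, $\mathcal F_m$ is the set of fixed-point-free involutions of $S_m$ with conjugation action and height $\ell/2$; its Bruhat order is the weakest partial order with $z\le tzt$ for transpositions $t$ with $\ell(z)\le\ell(tzt)$. Regard $\mathcal F_{n-2}\subset S_n$ (fixing $n-1,n$); $w_0$ is the longest element of $S_n$; $Y_1=\rho(\mathcal F_{n-2})\subseteq\mathcal F_n$, with the Bruhat order of $\mathcal F_n$ restricted. *)

From mathcomp Require Import all_boot all_order all_fingroup.
From Stdlib Require Import Relations.
Set Implicit Arguments. Unset Strict Implicit. Unset Printing Implicit Defensive.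

(* Permutations of {1..m} are 'S_m = {perm 'I_m} (0-indexed: point i+1 of the
   paper is the ordinal i).  MathComp composes left to right:
   (s * t) x = t (s x); so the paper's right-to-left product u v is v * u. *)

Definition len m (s : 'S_m) : nat :=
  #|[set p : 'I_m * 'I_m | (p.1 < p.2) && (s p.2 < s p.1)]|.

Definition fpf m (z : 'S_m) : bool := [forall i, (z (z i) == i) && (z i != i)].

Definition bstep m (z z' : 'S_m) : Prop :=
  exists i j : 'I_m, i != j /\ z' = (tperm i j * z * tperm i j)%g /\ len z <= len z'.

Definition fbruhat m (z z' : 'S_m) : Prop :=
  [/\ fpf z, fpf z' & clos_refl_trans _ (fun a b => fpf a /\ bstep a b) z z'].

(* embedding S_{n-2} -> S_n fixing the last two points n-1, n *)
Definition ext_fun n (z : 'S_(n - 2)) (x : 'I_n) : 'I_n :=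
  if insub (val x) is Some y then widen_ord (leq_subr 2 n) (z y) else x.

Lemma ext_fun_inj n (z : 'S_(n - 2)) : injective (ext_fun z).
Proof.
move=> x1 x2; rewrite /ext_fun.
case: insubP => [y1 lt1 v1|ge1]; case: insubP => [y2 lt2 v2|ge2] //.
- move/(congr1 val)=> /= /val_inj /perm_inj e.
  by apply/val_inj; rewrite -v1 -v2 e.
- by move=> e; move: ge2; rewrite -e /= ltn_ord.
- by move=> e; move: ge1; rewrite e /= ltn_ord.
Qed.

Definition ext n (z : 'S_(n - 2)) : 'S_n := perm (@ext_fun_inj n z).

Definition w0 n : 'S_n := perm (@rev_ord_inj n).

(* s_{n-1} = (n-1, n), i.e. the transposition of ordinals n-2 and n-1 *)
Definition s_last n : 'S_n :=
  match n return 'S_n with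
  | 0 => 1%g
  | k.+1 => tperm (inord k.-1 : 'I_k.+1) ord_max
  end.

(* rho(z) = w0 z s_{n-1} w0 (right-to-left composition) *)
Definition rho n (z : 'S_(n - 2)) : 'S_n := (w0 n * s_last n * ext z * w0 n)%g.

Definition Y1 n (y : 'S_n) : Prop := exists2 z : 'S_(n - 2), fpf z & y = rho z.

From mathcomp Require Import all_boot all_order all_fingroup.
From mathcomp Require Import zify.
From Stdlib Require Import Relations.
Set Implicit Arguments. Unset Strict Implicit. Unset Printing Implicit Defensive.

(* rho z is the conjugate by w0 of z s_{n-1}, where z acts on the first n - 2
   points and s_{n-1} swaps the last two, so that the two factors commute.
   Conjugation by w0 preserves fixed-point-freeness, length, and the shape
   t z t of a Bruhat step, since it maps transpositions to transpositions.  The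
   map z |-> z s_{n-1} is injective, keeps fixed-point-free involutions
   fixed-point-free, raises the length by exactly one (the only new inversion
   is the pair of the last two points), and sends t z t to t (z s_{n-1}) t, as
   s_{n-1} commutes with every transposition t of the first n - 2 points.  So
   both maps send Bruhat steps to Bruhat steps. *)

Local Open Scope group_scope.

Definition inversions m (s : 'S_m) : {set 'I_m * 'I_m} :=
  [set p : 'I_m * 'I_m | (p.1 < p.2) && (s p.2 < s p.1)].

Lemma lenE m (s : 'S_m) : len s = #|inversions s|.
Proof. by []. Qed.

Lemma fbruhat_homo m k (f : 'S_m -> 'S_k) :
  {homo f : z / fpf z} -> (forall z z', bstep z z' -> bstep (f z) (f z')) ->
  forall z1 z2, fbruhat z1 z2 -> fbruhat (f z1) (f z2).
Proof.
move=> f_fpf f_bstep z1 z2 [fz1 fz2 steps]; split; [exact: f_fpf | exact: f_fpf |].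
elim: steps {fz1 fz2} => [x y [fx xy] | x | x y w _ IHxy _ IHyw].
- by apply: rt_step; split; [exact: f_fpf | exact: f_bstep].
- exact: rt_refl.
- exact: rt_trans IHxy IHyw.
Qed.

Lemma fpf_conjg m (z g : 'S_m) : fpf z -> fpf (z ^ g).
Proof.
move=> /forallP fz; apply/forallP => x; rewrite -(permKV g x) !permJ.
by have /andP[/eqP -> zx] := fz (g^-1 x); rewrite eqxx (inj_eq perm_inj).
Qed.

Section LongestElement.
Variable n : nat.

Lemma w0E (x : 'I_n) : w0 n x = rev_ord x. Proof. by rewrite permE. Qed.

Lemma w0K : involutive (w0 n). Proof. by move=> x; rewrite !w0E rev_ordK. Qed.

Lemma w0V : (w0 n)^-1 = w0 n.
Proof. by apply/permP => x; rewrite -{1}(w0K x) permK. Qed.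

Lemma len_conj_w0 (x : 'S_n) : len (x ^ w0 n) = len x.
Proof.
pose f (p : 'I_n * 'I_n) := (w0 n p.2, w0 n p.1).
have fK : involutive f by case=> i j; rewrite /f /= !w0K.
rewrite !lenE -(card_imset _ (inv_inj fK)) (can2_imset_pre _ fK fK).
apply: eq_card => -[i j]; rewrite !inE /= !permJ !w0E /=.
by move: (ltn_ord i) (ltn_ord j) (ltn_ord (x i)) (ltn_ord (x j)) => *; lia.
Qed.

Lemma bstep_conj_w0 (z z' : 'S_n) : bstep z z' -> bstep (z ^ w0 n) (z' ^ w0 n).
Proof.
move=> [i [j [ij [-> lezz']]]]; exists (w0 n i), (w0 n j); split; [|split].
- by rewrite (inj_eq (inv_inj w0K)).
- by rewrite !conjMg !tpermJ.
- by rewrite !len_conj_w0.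
Qed.

End LongestElement.

Section Extension.
Variable n : nat.
Local Notation widen2 := (widen_ord (leq_subr 2 n)).

Lemma widen2_inj : injective widen2.
Proof. by move=> x y /(congr1 val) /= /val_inj. Qed.

Lemma widen2_or_high (x : 'I_n) : (exists y, x = widen2 y) \/ n - 2 <= x.
Proof.
case: (ltnP x (n - 2)) => [lt_x|]; last by right.
by left; exists (Ordinal lt_x); apply: val_inj.
Qed.

Lemma ext_widen2 (z : 'S_(n - 2)) y : ext z (widen2 y) = widen2 (z y).
Proof. by rewrite permE /ext_fun /= valK. Qed.

Lemma ext_high (z : 'S_(n - 2)) (x : 'I_n) : n - 2 <= x -> ext z x = x.
Proof. by move=> le_x; rewrite permE /ext_fun insubF // ltnNge le_x. Qed.

Lemma extM (z1 z2 : 'S_(n - 2)) : ext (z1 * z2) = ext z1 * ext z2.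
Proof.
apply/permP => x; rewrite permM.
by case: (widen2_or_high x) => [[y ->]|le_x]; rewrite ?ext_widen2 ?permM ?ext_high.
Qed.

Lemma ext_inj : injective (@ext n).
Proof.
by move=> z1 z2 e; apply/permP => y; apply: widen2_inj; rewrite -!ext_widen2 e.
Qed.

Lemma widen2_neq_high (x : 'I_n) y : n - 2 <= x -> x != widen2 y.
Proof. by move=> le_x; apply/eqP => e; move: le_x; rewrite e /= leqNgt ltn_ord. Qed.

Lemma ext_tperm (i j : 'I_(n - 2)) : ext (tperm i j) = tperm (widen2 i) (widen2 j).
Proof.
apply/permP => x; case: (widen2_or_high x) => [[y ->]|le_x].
  by rewrite ext_widen2 (inj_tperm _ _ _ widen2_inj).
by rewrite ext_high // tpermD // eq_sym widen2_neq_high.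
Qed.

Lemma commute_tperm_ext (a b : 'I_n) (z : 'S_(n - 2)) :
  n - 2 <= a -> n - 2 <= b -> commute (tperm a b) (ext z).
Proof.
move=> le_a le_b; apply/permP => x; rewrite !permM.
case: (widen2_or_high x) => [[y ->]|le_x].
  by rewrite ext_widen2 !tpermD ?ext_widen2 // widen2_neq_high.
by rewrite !ext_high //; case: tpermP.
Qed.

End Extension.

Arguments widen2_inj {n}.

Section LastSwap.
Variables (n : nat) (a b : 'I_n).
Hypotheses (n_gt1 : 1 < n) (val_a : a = n - 2 :> nat) (val_b : b = n.-1 :> nat).
Local Notation widen2 := (widen_ord (leq_subr 2 n)).

Lemma widen2_or_last (x : 'I_n) : (exists y, x = widen2 y) \/ x = a \/ x = b.
Proof.
case: (widen2_or_high x) => [|le_x]; [by left | right].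
have : x = a :> nat \/ x = b :> nat by rewrite val_a val_b; move: (ltn_ord x); lia.
by case=> /val_inj; [left | right].
Qed.

Lemma high_a : n - 2 <= a. Proof. by rewrite val_a. Qed.
Lemma high_b : n - 2 <= b. Proof. by rewrite val_b; lia. Qed.
Lemma a_neq_b : a != b. Proof. by rewrite -val_eqE /= val_a val_b; lia. Qed.

Lemma tperm_ext_widen2 (z : 'S_(n - 2)) y :
  (tperm a b * ext z) (widen2 y) = widen2 (z y).
Proof. by rewrite permM tpermD ?ext_widen2 ?widen2_neq_high ?high_a ?high_b. Qed.

Lemma tperm_ext_a (z : 'S_(n - 2)) : (tperm a b * ext z) a = b.
Proof. by rewrite permM tpermL ext_high ?high_b. Qed.

Lemma tperm_ext_b (z : 'S_(n - 2)) : (tperm a b * ext z) b = a.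
Proof. by rewrite permM tpermR ext_high ?high_a. Qed.

Lemma fpf_tperm_ext (z : 'S_(n - 2)) : fpf z -> fpf (tperm a b * ext z).
Proof.
move=> /forallP fz; apply/forallP => x.
case: (widen2_or_last x) => [[y ->]|[->|->]].
- by rewrite !tperm_ext_widen2 !(inj_eq widen2_inj) fz.
- by rewrite tperm_ext_a tperm_ext_b eqxx eq_sym a_neq_b.
- by rewrite tperm_ext_b tperm_ext_a eqxx a_neq_b.
Qed.

Lemma len_tperm_ext (z : 'S_(n - 2)) : len (tperm a b * ext z) = (len z).+1.
Proof.
rewrite !lenE; pose f (q : 'I_(n - 2) * 'I_(n - 2)) := (widen2 q.1, widen2 q.2).
have f_inj : injective f.
  by move=> [x1 x2] [y1 y2]; rewrite /f /= => -[/val_inj -> /val_inj ->].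
have img_low p : p \in f @: inversions z -> (p.1 < n - 2) && (p.2 < n - 2).
  by case/imsetP => q _ ->; rewrite /= !ltn_ord.
suff -> : inversions (tperm a b * ext z) = (a, b) |: f @: inversions z.
  by rewrite cardsU1 card_imset // (contra (img_low _)) //= val_a ltnn.
(* A pair meeting {a, b} in one point is never an inversion: {a, b} is mapped
   to itself, and the points below n - 2 stay below n - 2. *)
apply/setP => -[p1 p2]; rewrite !inE /=.
case: (widen2_or_last p1) => [[y1 ->]|[->|->]];
  case: (widen2_or_last p2) => [[y2 ->]|[->|->]];
  rewrite ?tperm_ext_widen2 ?tperm_ext_a ?tperm_ext_b.
- rewrite -[(widen2 y1, widen2 y2)]/(f (y1, y2)) mem_imset // inE /=.
  by rewrite xpair_eqE eq_sym (negbTE (widen2_neq_high _ high_a)).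
all: rewrite (contraNF (@img_low _)) ?xpair_eqE -?val_eqE /= ?val_a ?val_b.
all: try have := ltn_ord y1; try have := ltn_ord y2.
all: try have := ltn_ord (z y1); try have := ltn_ord (z y2).
all: lia.
Qed.

Lemma bstep_tperm_ext (z z' : 'S_(n - 2)) :
  bstep z z' -> bstep (tperm a b * ext z) (tperm a b * ext z').
Proof.
move=> [i [j [ij [-> le_zz']]]]; exists (widen2 i), (widen2 j); split; [|split].
- by rewrite (inj_eq widen2_inj).
- rewrite !extM !mulgA (commute_tperm_ext (tperm i j) high_a high_b).
  by rewrite ext_tperm.
- by rewrite !len_tperm_ext.
Qed.

End LastSwap.

Lemma s_lastE n : 1 < n ->
  exists a b : 'I_n, [/\ a = n - 2 :> nat, b = n.-1 :> nat & s_last n = tperm a b].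
Proof.
by case: n => // k k_gt0; exists (inord k.-1), ord_max; split => //=; rewrite inordK; lia.
Qed.

Lemma rhoE n (z : 'S_(n - 2)) : rho z = (s_last n * ext z) ^ w0 n.
Proof. by rewrite /rho conjgE w0V !mulgA. Qed.

Theorem proposition3p2 (n : nat) (hn : 4 <= n) (he : ~~ odd n) :
  [/\ (forall z : 'S_(n - 2), fpf z -> fpf (rho z)),
      (forall y : 'S_n, Y1 y -> fpf y),
      (forall z1 z2 : 'S_(n - 2), fpf z1 -> fpf z2 -> rho z1 = rho z2 -> z1 = z2)
    & (forall z1 z2 : 'S_(n - 2), fbruhat z1 z2 -> fbruhat (rho z1) (rho z2))].
Proof.
have n_gt1 : 1 < n by lia.
have [a [b [val_a val_b s_last_ab]]] := s_lastE n_gt1.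
have rho_ab (z : 'S_(n - 2)) : rho z = (tperm a b * ext z) ^ w0 n.
  by rewrite rhoE s_last_ab.
have fpf_rho (z : 'S_(n - 2)) : fpf z -> fpf (rho z).
  by move=> fz; rewrite rho_ab; apply/fpf_conjg/fpf_tperm_ext.
split=> //.
- by move=> y [z fz ->]; apply: fpf_rho.
- by move=> z1 z2 _ _; rewrite !rho_ab => /conjg_inj /mulgI /ext_inj.
- apply: fbruhat_homo => // z z' zz'; rewrite !rho_ab.
  exact/bstep_conj_w0/bstep_tperm_ext.
Qed.
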